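(* Let $\beta\in[0,\tfrac12)$ and let $u,v:\mathbb{T}_m\to\mathbb{R}$ be bounded functions such that $-\Delta_\beta u(x)\ge-\Delta_\beta v(x)$ for all $x\in\mathbb{T}_m$ and $\liminf_{x\to y}u(x)\ge\limsup_{x\to y}v(x)$ for every $y\in\partial\mathbb{T}_m$. Then $u\ge v$ on $\mathbb{T}_m$. Moreover, if $\beta>0$, then either $u>v$ on $\mathbb{T}_m$ or $u\equiv v$.
   Context: Tree: for an integer $m\ge2$, $\mathbb{T}_m$ has vertices the root $\emptyset$ and all finite sequences $(\emptyset,a_1,\dots,a_k)$, $a_i\in\{0,\dots,m-1\}$; $|x|$ is the level, successors of $x$ are $(x,i)$, $\hat x$ is the immediate predecessor of $x\ne\emptyset$. A branch is an infinite sequence $(x_n)_{n\ge0}$ with $x_0=\emptyset$ and $x_{n+1}$ a successor of $x_n$; $\partial\mathbb{T}_m$ is the set of branches; for $y=(x_n)$, $\liminf_{x\to y}u(x)=\liminf_n u(x_n)$ and $\limsup_{x\to y}v(x)=\limsup_n v(x_n)$. Operator: $p_\beta=1$ if $\beta=0$, $p_\beta=\beta/(1-\beta)$ if $\beta\in(0,1)$. $\Delta_\beta u(\emptyset)=\frac1m\sum_{i=0}^{m-1}u(\emptyset,i)-u(\emptyset)$ and, for $x\ne\emptyset$, $\Delta_\beta u(x)=\big(\beta u(\hat x)+\frac{1-\beta}{m}\sum_{i=0}^{m-1}u(x,i)-u(x)\big)p_\beta^{-|x|}$. *)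

From mathcomp Require Import all_boot all_order all_algebra.
From mathcomp Require Import all_classical all_reals all_analysis.
Set Implicit Arguments. Unset Strict Implicit. Unset Printing Implicit Defensive.
Import Order.TTheory GRing.Theory Num.Theory.
Local Open Scope ring_scope.

(* Vertices of the m-ary tree T_m: finite sequences of digits in {0,..,m-1}.
   Encoding convention: the sequence is stored in REVERSE order, i.e. the
   vertex (root, a_1, ..., a_k) is the list [:: a_k; ...; a_1]. *)
Definition vertex (m : nat) := seq 'I_m.

Definition level m (x : vertex m) : nat := size x.
Definition succ m (x : vertex m) (i : 'I_m) : vertex m := i :: x.
Definition pred_vertex m (x : vertex m) : vertex m := behead x.

(* A branch is determined by the infinite sequence of digits b 0, b 1, ...;
   its n-th vertex is (root, b 0, ..., b (n-1)) (stored reversed). *)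
Fixpoint branch_vertex m (b : nat -> 'I_m) (n : nat) : vertex m :=
  match n with
  | 0 => [::]
  | n'.+1 => b n' :: branch_vertex b n'
  end.

Definition pbeta {R : realType} (beta : R) : R :=
  if beta == 0 then 1 else beta / (1 - beta).

Definition Delta {R : realType} (m : nat) (beta : R) (u : vertex m -> R)
  (x : vertex m) : R :=
  if x is [::] then
    (m%:R)^-1 * (\sum_(i < m) u (succ x i)) - u x
  else
    (beta * u (pred_vertex x) + (1 - beta) / m%:R * (\sum_(i < m) u (succ x i))
      - u x) * (pbeta beta) ^- (level x).

From mathcomp Require Import all_boot all_order all_algebra.
From mathcomp Require Import all_classical all_reals all_analysis.
From mathcomp Require Import lra zify.
Import Order.TTheory GRing.Theory Num.Theory.
Local Open Scope ring_scope.
Set Implicit Arguments. Unset Strict Implicit.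

(* Put w := v - u.  The hypothesis on Delta says that w is subharmonic: w lies
   below the mean value operator M w, where at x <> root
   M w x = beta w(parent) + (1 - beta) (average of w over the children).
   If w x > 0, climb from x to a vertex y at least as large as its parent (or
   the root); from there, stepping repeatedly to a child maximising w keeps
   this property, and subharmonicity then forces w never to decrease.  So
   w >= w x > 0 eventually along a branch, contradicting liminf u >= limsup v.
   For beta > 0, a zero of w <= 0 propagates to the parent (which has weight
   beta in M w) and to all children (their average is >= 0, each is <= 0). *)

Lemma limn_inf_addr_le_sup (R : realType) (a c : R^nat) (N : nat) (d : R) :
  bounded_fun a -> bounded_fun c ->
  (forall n, (N <= n)%N -> a n + d <= c n) -> limn_inf a + d <= limn_sup c.
Proof.
move=> ba bc acd; rewrite limn_infE // limn_supE //.
have infs_sups k j : infs a k + d <= sups c j.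
  pose n := maxn N (maxn k j).
  have ak : infs a k <= a n.
    apply: ge_inf; first exact/has_lbound_sdrop/bounded_fun_has_lbound.
    by exists n => //=; rewrite /n; lia.
  have cj : c n <= sups c j.
    apply: ub_le_sup; first exact/has_ubound_sdrop/bounded_fun_has_ubound.
    by exists n => //=; rewrite /n; lia.
  by have := acd n (leq_maxl _ _); lra.
rewrite -lerBrDr; apply: ge_sup; first by exists (infs a 0), 0%N.
move=> _ [k _ <-]; rewrite lerBrDr.
apply: lb_le_inf; first by exists (sups c 0), 0%N.
by move=> _ [j _ <-]; exact: infs_sups.
Qed.

Lemma bounded_fun_comp (R : realType) (T U : Type) (f : U -> R) (g : T -> U) :
  bounded_fun f -> bounded_fun (f \o g).
Proof.
by move=> [M [M_real le_M]]; exists M; split=> // N lt_MN t _; exact: le_M.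
Qed.

Section BranchThrough.
Variables (m : nat) (next : vertex m -> 'I_m) (y : vertex m).

Definition grow (x : vertex m) : vertex m := succ x (next x).

(* Vertices are stored reversed, so the digits of [y] read from the root are
   [rev y]; below [y] the branch follows [next]. *)
Definition branch_through (n : nat) : 'I_m :=
  if (n < size y)%N then nth (next y) (rev y) n
  else next (iter (n - size y) grow y).

Lemma branch_through_prefix n : (n <= size y)%N ->
  branch_vertex branch_through n = drop (size y - n) y.
Proof.
elim: n => [|n IHn] lt_ny /=; first by rewrite subn0 drop_size.
rewrite IHn 1?ltnW // /branch_through lt_ny nth_rev //.
by rewrite [RHS](drop_nth (next y)) ?subnSK //; lia.
Qed.

Lemma branch_through_iter k :
  branch_vertex branch_through (size y + k) = iter k grow y.
Proof.
elim: k => [|k IHk].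
  by rewrite addn0 branch_through_prefix // subnn drop0.
by rewrite addnS /= IHk /branch_through ltnNge leq_addr /= addKn.
Qed.

End BranchThrough.

Section MeanValue.
Variables (R : realType) (m : nat) (beta : R).
Implicit Types (u v w : vertex m -> R) (x : vertex m).

Definition child_mean w x : R := m%:R^-1 * \sum_(i < m) w (succ x i).

Definition mean_op w x : R :=
  if x is [::] then child_mean w x
  else beta * w (pred_vertex x) + (1 - beta) * child_mean w x.

Definition subharmonic w := forall x, w x <= mean_op w x.

Lemma DeltaE w x : Delta beta w x = (mean_op w x - w x) * pbeta beta ^- level x.
Proof.
rewrite /Delta /mean_op /child_mean.
by case: x => [|a x]; rewrite ?expr0 ?invr1 ?mulr1 ?mulrA.
Qed.

Lemma mean_opB u v x :
  mean_op (fun y => v y - u y) x = mean_op v x - mean_op u x.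
Proof.
have meanB :
    child_mean (fun y => v y - u y) x = child_mean v x - child_mean u x.
  by rewrite /child_mean sumrB mulrBr.
by rewrite /mean_op meanB; case: x {meanB} => [|a x] //; lra.
Qed.

Hypotheses (beta_ge0 : 0 <= beta) (beta_lt1 : beta < 1).

Lemma one_sub_beta_gt0 : 0 < 1 - beta.
Proof. by rewrite subr_gt0. Qed.

Lemma pbeta_gt0 : 0 < pbeta beta.
Proof.
rewrite /pbeta; case: eqP => [_|beta_neq0]; first exact: ltr01.
by rewrite divr_gt0 ?subr_gt0 // lt_neqAle eq_sym beta_ge0 andbT; apply/eqP.
Qed.

Lemma subharmonic_sub u v :
  (forall x, Delta beta u x <= Delta beta v x) ->
  subharmonic (fun x => v x - u x).
Proof.
move=> le_Delta x; have := le_Delta x.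
rewrite !DeltaE ler_pM2r ?invr_gt0 ?exprn_gt0 ?pbeta_gt0 // mean_opB; lra.
Qed.

Hypothesis m_gt0 : (0 < m)%N.

Definition best_child w x : 'I_m :=
  [arg max_(i > Ordinal m_gt0) w (succ x i)]%O.

Lemma child_mean_le_best w x : child_mean w x <= w (succ x (best_child w x)).
Proof.
have m_pos : 0 < m%:R :> R by rewrite ltr0n.
rewrite /child_mean ler_pdivrMl // mulr_natl -[X in _ *+ X](card_ord m).
rewrite -sumr_const.
apply: ler_sum => i _; rewrite /best_child.
by case: arg_maxP => // j _; apply.
Qed.

Definition rising w x := x = [::] \/ w (pred_vertex x) <= w x.

Lemma exists_rising_above w x : exists2 y, rising w y & w x <= w y.
Proof.
elim: x => [|a x [y rising_y le_xy]]; first by exists [::]; first left.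
have [le_x_ax|lt_ax_x] := leP (w x) (w (a :: x)).
  by exists (a :: x); first right.
by exists y => //; apply: le_trans le_xy; exact: ltW.
Qed.

Lemma rising_best_child w x : subharmonic w -> rising w x ->
  w x <= w (succ x (best_child w x)).
Proof.
move=> sub_w rising_x; have le_mean := sub_w x.
have le_best := child_mean_le_best w x; rewrite /mean_op in le_mean.
case: x rising_x le_mean le_best => [|a x] rising_x; first lra.
case: rising_x => // le_parent; rewrite /pred_vertex /= in le_parent *.
set W := w (succ _ _); set A := child_mean w _ => le_mean le_AW.
have := ler_wpM2l beta_ge0 le_parent.
have := ler_wpM2l (ltW one_sub_beta_gt0) le_AW.
move=> le_1AW le_bx; rewrite -(ler_pM2l one_sub_beta_gt0); lra.
Qed.

Lemma iter_grow_increasing w x k : subharmonic w -> rising w x ->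
  w x <= w (iter k (grow (best_child w)) x).
Proof.
move=> sub_w rising_x; set z := iter k _ x.
suff [] : rising w z /\ w x <= w z by [].
rewrite {}/z; elim: k => [|k [rising_k le_k]] //=.
split; first by right; exact: rising_best_child.
by apply: (le_trans le_k); exact: rising_best_child.
Qed.

Lemma exists_branch_above w x : subharmonic w ->
  exists b N, forall n, (N <= n)%N -> w x <= w (branch_vertex b n).
Proof.
move=> sub_w; have [y rising_y le_xy] := exists_rising_above w x.
exists (branch_through (best_child w) y), (size y) => n le_yn.
rewrite -(subnKC le_yn) branch_through_iter.
exact: le_trans le_xy (iter_grow_increasing _ sub_w rising_y).
Qed.

Section NonPositive.
Variable w : vertex m -> R.
Hypotheses (sub_w : subharmonic w) (w_le0 : forall x, w x <= 0).

Lemma child_mean_le0 x : child_mean w x <= 0.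
Proof. by rewrite /child_mean mulr_ge0_le0 ?invr_ge0 // sumr_le0. Qed.

Lemma subharmonic_zero_parent a x : 0 < beta -> w (a :: x) = 0 -> w x = 0.
Proof.
move=> beta_gt0 w_ax0; apply/eqP; rewrite eq_le w_le0 /=.
have := sub_w (a :: x); rewrite /mean_op /pred_vertex /= w_ax0.
have := mulr_ge0_le0 (ltW one_sub_beta_gt0) (child_mean_le0 (a :: x)).
move=> le_mean0 le_sum; rewrite -(pmulr_rge0 _ beta_gt0); lra.
Qed.

Lemma subharmonic_zero_children x i : w x = 0 -> w (succ x i) = 0.
Proof.
move=> w_x0; have mean_ge0 : 0 <= child_mean w x.
  have := sub_w x; rewrite /mean_op w_x0; case: x w_x0 => // a x _.
  have := mulr_ge0_le0 beta_ge0 (w_le0 (pred_vertex (a :: x))).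
  move=> le_beta0 le_sum; rewrite -(pmulr_rge0 _ one_sub_beta_gt0); lra.
rewrite /child_mean pmulr_rge0 ?invr_gt0 ?ltr0n // in mean_ge0.
have sum0 : \sum_(j < m) w (succ x j) = 0.
  by apply/eqP; rewrite eq_le mean_ge0 andbT; apply: sumr_le0.
apply/eqP; rewrite -oppr_eq0; apply/eqP.
apply: (psumr_eq0P (P := xpredT) (F := fun j => - w (succ x j))) => //.
  by move=> j _; rewrite oppr_ge0.
by rewrite sumrN sum0 oppr0.
Qed.

Lemma subharmonic_nonpos_eq0 x0 : 0 < beta -> w x0 = 0 -> forall x, w x = 0.
Proof.
move=> beta_gt0 w_x00; have w_root0 : w [::] = 0.
  by elim: x0 w_x00 => // a x IHx /subharmonic_zero_parent-/(_ beta_gt0).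
by elim=> // a x IHx; exact: (subharmonic_zero_children a IHx).
Qed.

End NonPositive.

End MeanValue.

Theorem theorem2p2 (R : realType) (m : nat) (hm : (2 <= m)%N) (beta : R)
  (hb0 : 0 <= beta) (hb1 : beta < 1 / 2)
  (u v : vertex m -> R) (hu : bounded_fun u) (hv : bounded_fun v)
  (hDelta : forall x : vertex m, - Delta beta u x >= - Delta beta v x)
  (hbd : forall b : nat -> 'I_m,
      limn_inf (fun n => u (branch_vertex b n))
      >= limn_sup (fun n => v (branch_vertex b n))) :
  (forall x : vertex m, u x >= v x) /\
  (0 < beta -> (forall x : vertex m, u x > v x) \/ (forall x : vertex m, u x = v x)).
Proof.
have beta_lt1 : beta < 1 by lra.
have m_gt0 : (0 < m)%N by apply: leq_trans hm.
pose w x := v x - u x.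
have sub_w : subharmonic beta w.
  by apply: subharmonic_sub => // x; rewrite -lerN2.
have le_vu x : v x <= u x.
  rewrite -subr_le0 leNgt; apply/negP => w_gt0.
  have [b [N le_w]] := exists_branch_above hb0 beta_lt1 m_gt0 x sub_w.
  have : limn_inf (u \o branch_vertex b) + w x
         <= limn_sup (v \o branch_vertex b).
    apply: limn_inf_addr_le_sup
      (bounded_fun_comp _ hu) (bounded_fun_comp _ hv) _.
    by move=> n /le_w; rewrite /w /=; lra.
  by have := hbd b; rewrite /comp /w; lra.
split=> // beta_gt0.
have w_le0 y : w y <= 0 by rewrite subr_le0.
have [[x0 w_x00]|w_neq0] := pselect (exists x0, w x0 = 0).
  right=> x; apply/eqP; rewrite eq_sym -subr_eq0; apply/eqP.
  exact: (subharmonic_nonpos_eq0 hb0 beta_lt1 m_gt0 sub_w w_le0 beta_gt0 w_x00).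
left=> x; rewrite lt_neqAle le_vu andbT; apply/eqP => eq_vu.
by apply: w_neq0; exists x; rewrite /w eq_vu subrr.
Qed.
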